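(* Let $(B,\lfloor\cdot,\cdot\rfloor)$ be an SSD space with associated quadratic form $q$, and let $A\subset B$ be a maximally $q$-positive set which is convex. Then $A$ is an affine subset of $B$.
   Context: An SSD (symmetrically self-dual) space is a pair $(B,\lfloor\cdot,\cdot\rfloor)$ where $B$ is a nonzero real vector space and $\lfloor\cdot,\cdot\rfloor:B\times B\to\mathbb{R}$ is a symmetric bilinear form; its quadratic form is $q(b)=\frac12\lfloor b,b\rfloor$. A nonempty set $A\subset B$ is $q$-positive if $q(b-c)\ge 0$ for all $b,c\in A$. A set is maximally $q$-positive if it is $q$-positive and not properly contained in any other $q$-positive set. *)

From HB Require Import structures.
From mathcomp Require Import all_boot all_order all_algebra.
From mathcomp Require Import boolp classical_sets reals.
Set Implicit Arguments. Unset Strict Implicit. Unset Printing Implicit Defensive.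
Import Order.TTheory GRing.Theory Num.Theory.
Local Open Scope ring_scope.
Local Open Scope classical_set_scope.

Definition symmetric_bilinear (R : realType) (B : lmodType R)
  (bf : B -> B -> R) : Prop :=
  (forall a b, bf a b = bf b a) /\
  (forall (c : R) (a a' b : B), bf (c *: a + a') b = c * bf a b + bf a' b).

Definition SSD_space (R : realType) (B : lmodType R) (bf : B -> B -> R) : Prop :=
  (exists b : B, b != 0) /\ symmetric_bilinear bf.

Definition qform (R : realType) (B : lmodType R) (bf : B -> B -> R) (b : B) : R :=
  2^-1 * bf b b.

Definition q_positive (R : realType) (B : lmodType R) (bf : B -> B -> R)
  (A : set B) : Prop :=
  A !=set0 /\ (forall b c, A b -> A c -> 0 <= qform bf (b - c)).

Definition maximally_q_positive (R : realType) (B : lmodType R)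
  (bf : B -> B -> R) (A : set B) : Prop :=
  q_positive bf A /\ (forall A' : set B, q_positive bf A' -> A `<=` A' -> A' = A).

Definition convex_set (R : realType) (B : lmodType R) (A : set B) : Prop :=
  forall (a b : B) (t : R), A a -> A b -> 0 <= t -> t <= 1 ->
    A (t *: a + (1 - t) *: b).

Definition affine_set (R : realType) (B : lmodType R) (A : set B) : Prop :=
  forall (a b : B) (t : R), A a -> A b -> A (t *: a + (1 - t) *: b).

From HB Require Import structures.
From mathcomp Require Import all_boot all_order all_algebra.
From mathcomp Require Import boolp classical_sets reals.
From mathcomp Require Import ring lra.
Set Implicit Arguments. Unset Strict Implicit. Unset Printing Implicit Defensive.
Import Order.TTheory GRing.Theory Num.Theory.
Local Open Scope ring_scope.
Local Open Scope classical_set_scope.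

(* Let c = s a + (1 - s) b with a, b in A. For every x in A, c - x is a
   multiple m (y - z) of a difference of two points of A: when s lies in
   [0, 1], c itself is in A; otherwise c is an extrapolation beyond a or b,
   and x, c and a point of the segment [x, a] (or [x, b]) are aligned. Hence
   q (c - x) = m^2 q (y - z) >= 0, so A u {c} is q-positive and maximality
   puts c in A. *)

Section QuadraticForm.
Variables (R : realType) (B : lmodType R) (bf : B -> B -> R).
Hypothesis bf_sb : symmetric_bilinear bf.

Lemma bf0l (b : B) : bf 0 b = 0.
Proof.
have := (proj2 bf_sb) 1 0 0 b; rewrite scale1r addr0 mul1r => /eqP.
by rewrite -subr_eq subrr eq_sym => /eqP.
Qed.

Lemma bfZl (c : R) (a b : B) : bf (c *: a) b = c * bf a b.
Proof. by have := (proj2 bf_sb) c a 0 b; rewrite !addr0 bf0l addr0. Qed.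

Lemma qform0 : qform bf 0 = 0.
Proof. by rewrite /qform bf0l mulr0. Qed.

Lemma qformZ (m : R) (v : B) : qform bf (m *: v) = m ^+ 2 * qform bf v.
Proof. by rewrite /qform bfZl (proj1 bf_sb) bfZl; ring. Qed.

Lemma qformN (v : B) : qform bf (- v) = qform bf v.
Proof. by rewrite -scaleN1r qformZ sqrrN expr1n mul1r. Qed.

End QuadraticForm.

Section ConvexSets.
Variables (R : realType) (B : lmodType R) (A : set B).
Hypothesis A_convex : convex_set A.

Lemma extrapolation_subE (t : R) (a b x : B) : t != 0 ->
  t *: b + (1 - t) *: a - x = t *: (b - (t^-1 *: x + (1 - t^-1) *: a)).
Proof.
move=> t0; rewrite scalerBr scalerDr !scalerA mulfV // scale1r mulrBr mulr1.
by rewrite mulfV // opprD -scaleNr opprB addrA [in RHS]addrAC.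
Qed.

Lemma convex_extrapolation_sub (t : R) (a b x : B) :
  A a -> A x -> 1 <= t ->
  exists2 y, A y & t *: b + (1 - t) *: a - x = t *: (b - y).
Proof.
move=> Aa Ax t1; have t0 : t != 0 by rewrite gt_eqF //; lra.
exists (t^-1 *: x + (1 - t^-1) *: a); last exact: extrapolation_subE.
by apply: A_convex; rewrite ?invr_ge0 ?invr_le1 ?unitfE //; lra.
Qed.

Lemma convex_line_sub (s : R) (a b x : B) : A a -> A b -> A x ->
  exists m y z, [/\ A y, A z & s *: a + (1 - s) *: b - x = m *: (y - z)].
Proof.
move=> Aa Ab Ax.
have [s0|s0] := ltP s 0.
  have [|y Ay E] := @convex_extrapolation_sub (1 - s) a b x Aa Ax; first lra.
  by exists (1 - s), b, y; split=> //; rewrite -E subKr [s *: a + _]addrC.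
have [s1|s1] := leP s 1.
  by exists 1, (s *: a + (1 - s) *: b), x; rewrite scale1r; split=> //; apply: A_convex.
have [|y Ay E] := @convex_extrapolation_sub s b a x Ab Ax; first lra.
by exists s, a, y; split.
Qed.

End ConvexSets.

Lemma maximally_q_positive_mem (R : realType) (B : lmodType R)
    (bf : B -> B -> R) (A : set B) (c : B) :
  symmetric_bilinear bf -> maximally_q_positive bf A ->
  (forall x, A x -> 0 <= qform bf (c - x)) -> A c.
Proof.
move=> bf_sb [[[x0 Ax0] A_pos] A_max] c_pos.
have Ac_pos : q_positive bf (A `|` [set c]).
  split=> [|y z [Ay|->] [Az|->]]; first by exists x0; left.
  - exact: A_pos.
  - by rewrite -opprB qformN //; apply: c_pos.
  - exact: c_pos.
  - by rewrite subrr qform0.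
by rewrite -(A_max _ Ac_pos (@subsetUl _ A [set c])); right.
Qed.

Theorem mainTheorem1 (R : realType) (B : lmodType R) (bf : B -> B -> R)
  (A : set B) :
  SSD_space bf -> maximally_q_positive bf A -> convex_set A -> affine_set A.
Proof.
move=> [_ bf_sb] A_maxpos A_convex a b s Aa Ab.
apply: (maximally_q_positive_mem bf_sb A_maxpos) => x Ax.
have [m [y [z [Ay Az ->]]]] := convex_line_sub A_convex s Aa Ab Ax.
by rewrite qformZ // mulr_ge0 ?sqr_ge0 //; apply: (proj2 (proj1 A_maxpos)).
Qed.
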